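(* Let $G$ be a connected graph with a fixed vertex $w$. Take a cycle $C_c$ of length $c\in\{5,6\}$, vertex-disjoint from $G$, and identify one vertex of the cycle with $w$. Let $v_2$ be a vertex of $C_c$ at distance $2$ from $w$ on the cycle, and let $v_1$ be the unique common neighbour of $w$ and $v_2$ on $C_c$. Attach a path of length $2$ (with two new vertices) by identifying one of its endpoints with $v_2$, and denote the resulting graph by $G^*$. Then $\delta_{G^*}(w) = t_{G^*}(w) - t_{G^*-v_1}(w) \leq -2$.
   Context: All graphs are finite, simple, undirected. For a graph $H$ and vertex $x$, the transmission is $t_H(x)=\sum_{y\in V(H)}\mathrm{dist}_H(x,y)$; $H-v$ denotes $H$ with vertex $v$ and its incident edges deleted. The quantity $\delta_{G^*}(w)$ is taken with respect to the vertex $v_1$. *)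

From HB Require Import structures.
From mathcomp Require Import all_boot all_order all_algebra.
Set Implicit Arguments. Unset Strict Implicit. Unset Printing Implicit Defensive.
Import Order.TTheory GRing.Theory Num.Theory.

(* walkn e n x y : there is a walk of length at most n from x to y. *)
Fixpoint walkn (V : finType) (e : rel V) (n : nat) (x y : V) : bool :=
  match n with
  | 0 => x == y
  | n'.+1 => walkn e n' x y || [exists z, walkn e n' x z && e z y]
  end.

(* A shortest
   path has length < #|V|, so for connected pairs this is the true distance;
   for unreachable pairs it returns #|V| (never used below: all graphs are
   connected). *)
Definition dist (V : finType) (e : rel V) (x y : V) : nat :=
  find (fun n => walkn e n x y) (iota 0 #|V|).

Definition transmission (V : finType) (e : rel V) (x : V) : nat :=
  \sum_(y : V) dist e x y.

Definition vdel (V : finType) (e : rel V) (v : V) : rel {x : V | x != v} :=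
  fun a b => e (val a) (val b).

Arguments vdel {V} e v.

(* Vertex set of G^* :
   inl (inl a)  : vertex a of G (w = inl (inl w) is the identified vertex),
   inl (inr tt) : v1, the cycle neighbour of w,
   inr (inl i)  : remaining cycle vertices u_0, ..., u_{c-3}, with u_0 = v2,
                  cycle  w - v1 - u_0 - u_1 - ... - u_{c-3} - w,
   inr (inr j)  : the two new path vertices p_0, p_1, path v2 - p_0 - p_1. *)
Definition gstarV (T : finType) (c : nat) : finType :=
  ((T + unit) + ('I_(c.-2) + 'I_2))%type.

Definition gstar (T : finType) (e : rel T) (w : T) (c : nat) : rel (gstarV T c) :=
  fun x y =>
  match x, y with
  | inl (inl a), inl (inl b) => e a b
  | inl (inl a), inl (inr _) | inl (inr _), inl (inl a) => a == w
  | inl (inl a), inr (inl i) | inr (inl i), inl (inl a) =>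
      (a == w) && (val i == c - 3)
  | inl (inr _), inr (inl i) | inr (inl i), inl (inr _) => val i == 0
  | inr (inl i), inr (inl j) => (val i == (val j).+1) || (val j == (val i).+1)
  | inr (inl i), inr (inr p) | inr (inr p), inr (inl i) =>
      (val i == 0) && (val p == 0)
  | inr (inr p), inr (inr q) => (val p == (val q).+1) || (val q == (val p).+1)
  | _, _ => false
  end.

Arguments gstar {T} e w c.

Definition gs_w (T : finType) (c : nat) (w : T) : gstarV T c := inl (inl w).
Definition gs_v1 (T : finType) (c : nat) : gstarV T c := inl (inr tt).

Arguments gs_w {T} c w.
Arguments gs_v1 T c.

Lemma gs_w_neq_v1 (T : finType) (c : nat) (w : T) : @gs_w T c w != @gs_v1 T c.
Proof. by []. Qed.

Definition gs_w_del (T : finType) (c : nat) (w : T) : {x : gstarV T c | x != @gs_v1 T c} :=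
  exist _ (@gs_w T c w) (@gs_w_neq_v1 T c w).

Definition delta_gstar (T : finType) (e : rel T) (w : T) (c : nat) : int :=
  (transmission (gstar e w c) (@gs_w T c w))%:Z
  - (transmission (vdel (gstar e w c) (@gs_v1 T c)) (@gs_w_del T c w))%:Z.

From HB Require Import structures.
From mathcomp Require Import all_boot all_order all_algebra zify.
Import Order.TTheory GRing.Theory Num.Theory.
Set Implicit Arguments. Unset Strict Implicit.

(* Deleting v1 shortens no distance from w: G* - v1 is a subgraph of G* and is
   still connected, since the cycle can be walked round the other way.  It
   lengthens three of them: through v1, the vertices v2, p0, p1 are at distance
   at most 2, 3, 4 from w in G*, whereas in G* - v1 every walk to them goes
   round the remaining c - 2 edges of the cycle, so they are at distance at
   least c - 2, c - 1, c.  Since d(w, v1) = 1, this gives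
   t_{G*}(w) + 2 <= t_{G*-v1}(w) as soon as c >= 5. *)

Section Walks.
Variables (V : finType) (e : rel V).

Lemma walkn_rcons n x z y : walkn e n x z -> e z y -> walkn e n.+1 x y.
Proof. by move=> wxz ezy /=; apply/orP; right; apply/existsP; exists z; rewrite wxz. Qed.

Lemma walkn_path x p : path e x p -> walkn e (size p) x (last x p).
Proof.
elim/last_ind: p => [|p z IHp] /=; first by rewrite eqxx.
rewrite rcons_path size_rcons last_rcons => /andP[/IHp wxp ez].
exact: walkn_rcons wxp ez.
Qed.

(* No length condition is needed: [dist] never exceeds [#|V|]. *)
Lemma dist_le n x y : walkn e n x y -> dist e x y <= n.
Proof.
move=> wxy; case: (ltnP n #|V|) => [ltnV | geVn]; last first.
  by apply: leq_trans geVn; rewrite -[X in _ <= X](size_iota 0) find_size.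
rewrite /dist leqNgt; apply/negP => lt_n_dist.
by have := before_find 0 lt_n_dist; rewrite nth_iota // add0n wxy.
Qed.

Lemma connect_dist_lt x y : connect e x y -> dist e x y < #|V|.
Proof.
case/connectP => p pxp ->; case: (shortenP pxp) => q pxq uq _.
apply: leq_ltn_trans (dist_le (walkn_path pxq)) _.
by move/card_uniqP: uq => /= <-; apply: max_card.
Qed.

Lemma walkn_dist x y : connect e x y -> walkn e (dist e x y) x y.
Proof.
move/connect_dist_lt; rewrite /dist => ltdV.
have hasw : has (fun n => walkn e n x y) (iota 0 #|V|) by rewrite has_find size_iota.
by have := nth_find 0 hasw; rewrite nth_iota ?add0n.
Qed.

Lemma walkn_potential (f : V -> nat) :
    (forall x y, e x y -> f y <= (f x).+1) ->
  forall n x y, walkn e n x y -> f y <= f x + n.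
Proof.
move=> f_lip; elim=> [|n IHn] x y /=; first by move/eqP->; rewrite addn0.
case/orP => [/IHn|/existsP[z /andP[/IHn fz ezy]]]; rewrite addnS; first exact: leqW.
by apply: leq_trans (f_lip _ _ ezy) _.
Qed.

Lemma potential_le_dist (f : V -> nat) x y :
    (forall x y, e x y -> f y <= (f x).+1) -> f x = 0 -> connect e x y ->
  f y <= dist e x y.
Proof.
move=> f_lip fx0 /walkn_dist wxy.
by have := walkn_potential f_lip wxy; rewrite fx0.
Qed.

End Walks.

Section Homomorphisms.
Variables (V1 V2 : finType) (e1 : rel V1) (e2 : rel V2) (h : V1 -> V2).
Hypothesis h_homo : {homo h : x y / e1 x y >-> e2 x y}.

Lemma walkn_homo n x y : walkn e1 n x y -> walkn e2 n (h x) (h y).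
Proof.
elim: n x y => [|n IHn] x y /=; first by move/eqP->.
case/orP => [/IHn->//|/existsP[z /andP[/IHn wxz ezy]]].
exact: walkn_rcons wxz (h_homo ezy).
Qed.

Lemma connect_homo x y : connect e1 x y -> connect e2 (h x) (h y).
Proof.
case/connectP => p pxp ->; apply/connectP; exists (map h p); last by rewrite last_map.
exact: homo_path h_homo pxp.
Qed.

Lemma dist_homo x y : connect e1 x y -> dist e2 (h x) (h y) <= dist e1 x y.
Proof. by move/walkn_dist/walkn_homo/dist_le. Qed.

End Homomorphisms.

Lemma bigD1_sig (V : finType) (v : V) (F : V -> nat) :
  \sum_(x : V) F x = F v + \sum_(y : {x : V | x != v}) F (val y).
Proof. by rewrite (bigD1 v) //= (big_sub (predC1 v)). Qed.

Lemma leq_sum_strict_uniq (I : finType) (s : seq I) (f g : I -> nat) :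
    uniq s -> (forall i, f i <= g i) -> (forall i, i \in s -> f i < g i) ->
  \sum_i f i + size s <= \sum_i g i.
Proof.
move=> /card_uniqP <- le_fg lt_fg; rewrite -sum1_card [X in _ + X]big_mkcond -big_split /=.
by apply: leq_sum => i _; case: ifP => [/lt_fg|_]; rewrite ?addn1 ?addn0.
Qed.

Section GStar.
Variables (T : finType) (e : rel T) (w : T) (c : nat).
Hypothesis c_ge5 : 5 <= c.
Hypothesis w_connected : forall a : T, connect e w a.

Local Notation V := (gstarV T c).
Local Notation E := (gstar e w c).
Local Notation v1 := (gs_v1 T c).
Local Notation S := {x : V | x != v1}.
Local Notation Es := (vdel E v1).
Local Notation ws := (gs_w_del c w).

Definition cycle_vertex (i : 'I_c.-2) : S := exist _ (inr (inl i)) isT.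
Definition path_vertex (j : 'I_2) : S := exist _ (inr (inr j)) isT.

Lemma c2_gt0 : 0 < c.-2. Proof. by rewrite -subn2 subn_gt0 (leq_trans _ c_ge5). Qed.

Definition v2 : S := cycle_vertex (Ordinal c2_gt0).

Lemma connect_cycle_vertex i : connect Es ws (cycle_vertex i).
Proof.
suff conn_k k (j : 'I_c.-2) : j + k = c - 3 -> connect Es ws (cycle_vertex j).
  by apply: (conn_k (c - 3 - i)); have := ltn_ord i; lia.
elim: k j => [|k IHk] j jk.
  by apply: connect1; rewrite /vdel /gstar /= eqxx /=; apply/eqP; lia.
have lt_j1 : j.+1 < c.-2 by lia.
apply: connect_trans (IHk (Ordinal lt_j1) _) (connect1 _); first by rewrite /= -jk addSnnS.
by rewrite /vdel /gstar /= eqxx.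
Qed.

Lemma connect_path_vertex j : connect Es ws (path_vertex j).
Proof.
have conn_p0 (lt02 : 0 < 2) : connect Es ws (path_vertex (Ordinal lt02)).
  exact: connect_trans (connect_cycle_vertex (Ordinal c2_gt0)) (connect1 _).
case: j => [[|[|//]] lt_j2]; first exact: conn_p0.
exact: connect_trans (conn_p0 isT) (connect1 _).
Qed.

Lemma connect_gstar_del y : connect Es ws y.
Proof.
case: y => [[[a|[]]|[i|j]] ny] //.
- have -> : exist (fun x => x != v1) _ ny = gs_w_del c a by apply: val_inj.
  exact: connect_homo (w_connected a).
- have -> : exist (fun x => x != v1) _ ny = cycle_vertex i by apply: val_inj.
  exact: connect_cycle_vertex.
- have -> : exist (fun x => x != v1) _ ny = path_vertex j by apply: val_inj.
  exact: connect_path_vertex.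
Qed.

Lemma dist_gstar_le_del y : dist E (gs_w c w) (val y) <= dist Es ws y.
Proof. exact: dist_homo (connect_gstar_del y). Qed.

(* The distance from w in G* - v1 of the vertices outside G. *)
Definition cycle_potential (y : S) : nat :=
  match val y with
  | inl _ => 0
  | inr (inl i) => c - 2 - i
  | inr (inr j) => c - 1 + j
  end.

Lemma cycle_potential_lipschitz y z : Es y z -> cycle_potential z <= (cycle_potential y).+1.
Proof.
case: y z => [[[a|[]]|[i|j]] ny] [[[b|[]]|[k|l]] nz] //=;
rewrite /vdel /gstar /cycle_potential /=;
repeat match goal with i : 'I_ _ |- _ => have := ltn_ord i; move: (nat_of_ord i) => ?; clear i end;
intros; lia.
Qed.

Lemma cycle_potential_le_dist y : cycle_potential y <= dist Es ws y.
Proof. exact: potential_le_dist cycle_potential_lipschitz _ (connect_gstar_del y). Qed.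

Lemma walkn_gstar_v1 : walkn E 1 (gs_w c w) v1.
Proof. by apply: (walkn_rcons (z := gs_w c w)); rewrite /gstar /= eqxx. Qed.

Lemma walkn_gstar_v2 : walkn E 2 (gs_w c w) (val v2).
Proof. exact: walkn_rcons walkn_gstar_v1 _. Qed.

Lemma walkn_gstar_path_vertex (j : 'I_2) : walkn E (3 + j) (gs_w c w) (val (path_vertex j)).
Proof.
have walk_p0 (lt02 : 0 < 2) : walkn E 3 (gs_w c w) (val (path_vertex (Ordinal lt02))).
  exact: walkn_rcons walkn_gstar_v2 _.
case: j => [[|[|//]] lt_j2]; first exact: walk_p0.
exact: walkn_rcons (walk_p0 isT) _.
Qed.

Definition shortcut_vertices : seq S := [:: v2; path_vertex ord0; path_vertex ord_max].

Lemma uniq_shortcut_vertices : uniq shortcut_vertices.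
Proof. by []. Qed.

Lemma dist_gstar_lt_del y :
  y \in shortcut_vertices -> dist E (gs_w c w) (val y) < dist Es ws y.
Proof.
move=> y_short; apply: leq_trans (cycle_potential_le_dist y).
move: y_short; rewrite !inE => /or3P[] /eqP->;
  [ apply: leq_ltn_trans (dist_le walkn_gstar_v2) _
  | apply: leq_ltn_trans (dist_le (walkn_gstar_path_vertex _)) _ ..];
  rewrite /cycle_potential /=; lia.
Qed.

Lemma transmission_gstar_add2_le_del : transmission E (gs_w c w) + 2 <= transmission Es ws.
Proof.
have := leq_sum_strict_uniq uniq_shortcut_vertices dist_gstar_le_del dist_gstar_lt_del.
have := dist_le walkn_gstar_v1.
rewrite /transmission (bigD1_sig v1) /=; lia.
Qed.

End GStar.

Local Open Scope ring_scope.

Theorem lemma3 (T : finType) (e : rel T) (w : T) (c : nat) :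
  symmetric e -> irreflexive e -> (forall x y : T, connect e x y) ->
  (c = 5%N \/ c = 6%N) ->
  delta_gstar e w c <= -2.
Proof.
move=> _ _ e_connected c56.
have c_ge5 : (5 <= c)%N by case: c56 => ->.
have := transmission_gstar_add2_le_del c_ge5 (e_connected w).
rewrite /delta_gstar; lia.
Qed.
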